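(* Let $h$ and $k$ be relatively prime odd integers with $k>0$. Then $$B_{1}(h,k)=h\,s_{5}(h,k)+\frac{1}{2k}-\frac{1}{2}.$$
   Context: $[x]$ denotes the greatest integer $\le x$, and the sawtooth function is $((x))=x-[x]-\tfrac12$ if $x\notin\mathbb{Z}$ and $((x))=0$ if $x\in\mathbb{Z}$. For integers $h,k$ with $k>0$, $\gcd(h,k)=1$: $$B_{1}(h,k)=\sum_{j=1}^{k-1}(-1)^{j+\left[\frac{hj}{k}\right]}\left[\frac{hj}{k}\right],\qquad s_{5}(h,k)=\sum_{j \bmod k}(-1)^{j+\left[\frac{hj}{k}\right]}\left(\left(\frac{j}{k}\right)\right),$$ the latter sum over a complete residue system modulo $k$ (the Hardy–Berndt sum $s_5$). *)

From mathcomp Require Import all_boot all_order all_algebra.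
Set Implicit Arguments. Unset Strict Implicit. Unset Printing Implicit Defensive.
Import Order.TTheory GRing.Theory Num.Theory.
Local Open Scope ring_scope.

Definition floorq (x : rat) : int := Num.floor x.

Definition sawtooth (x : rat) : rat :=
  if x == (floorq x)%:~R then 0 else x - (floorq x)%:~R - 1/2.

Definition sgn_pow (n : int) : rat := (-1) ^ n.

Definition B1 (h k : int) : rat :=
  \sum_(1 <= j < `|k|%N)
     sgn_pow (j%:Z + floorq ((h * j%:Z)%:~R / k%:~R))
       * (floorq ((h * j%:Z)%:~R / k%:~R))%:~R.

(* s_5(h,k) = sum_{j mod k} (-1)^{j+[hj/k]} ((j/k)), over j = 0..k-1 *)
Definition s5 (h k : int) : rat :=
  \sum_(0 <= j < `|k|%N)
     sgn_pow (j%:Z + floorq ((h * j%:Z)%:~R / k%:~R))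
       * sawtooth (j%:~R / k%:~R).

From mathcomp Require Import all_boot all_order all_algebra zify ring.
Import Order.TTheory GRing.Theory Num.Theory.
Set Implicit Arguments. Unset Strict Implicit. Unset Printing Implicit Defensive.
Local Open Scope ring_scope.

(* Write h j = q_j k + r_j with 0 <= r_j < k.  Since h and k are odd,
   j + q_j and r_j have the same parity, and h ((j/k)) - q_j = r_j/k - h/2 for
   0 < j < k; hence h s_5(h,k) - B_1(h,k) is the sum of (-1)^r (r/k - h/2) over
   the nonzero residues r_j.  As j runs over 0..k-1 the r_j run over 0..k-1
   (h is invertible mod k) and r_0 = 0, so the difference is an alternating
   sum over r = 1..k-1, which telescopes in pairs to (k-1)/(2k). *)

Lemma odd_absz_double (h : int) : odd `|h|%N -> exists a : int, h = 2 * a + 1.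
Proof.
case: h => n /= oddn; have := odd_double_half n.
  by rewrite oddn; exists (n./2)%:Z; lia.
by rewrite (negbTE oddn) NegzE; exists (- (n./2)%:Z - 1); lia.
Qed.

Lemma sgn_powD2 (x c : int) : sgn_pow (x + 2 * c) = sgn_pow x.
Proof.
rewrite /sgn_pow expfzDr ?oppr_eq0 ?oner_eq0 // -exprz_exp.
have -> : (-1 : rat) ^ (2 : int) = 1 by rewrite -exprnP sqrrN expr1n.
by rewrite exp1rz mulr1.
Qed.

Lemma sum_alternating_affine (R : comPzRingType) (c d : R) (m : nat) :
  \sum_(0 <= r < (2 * m).+1) (-1) ^+ r * (r%:R * c - d) = m%:R * c - d.
Proof.
elim: m => [|m IHm]; first by rewrite big_nat1 expr0 mul0r add0r mul1r.
rewrite (_ : (2 * m.+1).+1 = (2 * m).+3)%N; last by lia.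
rewrite big_nat_recr //= big_nat_recr //= IHm !exprS exprM sqrrN !expr1n.
rewrite -[(2 * m).+2]addn2 -[(2 * m).+1]addn1 -[m.+1]addn1 !natrD; ring.
Qed.

Lemma floor_divz (R : archiRealFieldType) (n k : int) : 0 < k ->
  Num.floor (n%:~R / k%:~R : R) = (n %/ k)%Z.
Proof.
move=> k_gt0; have kR_gt0 : (0 : R) < k%:~R by rewrite ltr0z.
have r_ge0 : (0 : R) <= ((n %% k)%Z)%:~R by rewrite ler0z modz_ge0 // gt_eqF.
have r_lt : ((n %% k)%Z)%:~R < k%:~R :> R by rewrite ltr_int ltz_pmod.
have nE : n%:~R = ((n %/ k)%Z)%:~R * k%:~R + ((n %% k)%Z)%:~R :> R.
  by rewrite -intrM -intrD -divz_eq.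
apply: floor_def; rewrite nE mulrDl mulfK ?gt_eqF // intrD lerDl ltrD2l.
by rewrite ltr_pdivrMr // mul1r r_lt andbT divr_ge0 // ltW.
Qed.

Lemma sawtooth_int (n : int) : sawtooth n%:~R = 0.
Proof. by rewrite /sawtooth /floorq intrKfloor eqxx. Qed.

Lemma sawtooth_frac (x : rat) : 0 < x < 1 -> sawtooth x = x - 1 / 2.
Proof.
case/andP=> x_gt0 x_lt1.
have fl0 : floorq x = 0 by apply: floor_def; rewrite add0r ltW.
by rewrite /sawtooth fl0 gt_eqF // subr0.
Qed.

Section ResidueSum.
Variables (h k : int).
Hypothesis k_gt0 : 0 < k.

Definition mul_res (j : nat) : nat := absz ((h * j%:Z) %% k)%Z.

Lemma mul_resE (j : nat) : (mul_res j)%:Z = ((h * j%:Z) %% k)%Z.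
Proof. by rewrite /mul_res gez0_abs // modz_ge0 // gt_eqF. Qed.

Lemma mul_res_lt (j : nat) : (mul_res j < `|k|)%N.
Proof. by rewrite -ltz_nat mul_resE gtz0_abs // ltz_pmod. Qed.

Lemma mul_res_inj (i j : nat) : coprimez h k -> (i < `|k|)%N -> (j < `|k|)%N ->
  mul_res i = mul_res j -> i = j.
Proof.
move=> hk_coprime i_lt j_lt /(congr1 Posz); rewrite !mul_resE => /eqP eq_res.
have : (k %| h * (i%:Z - j%:Z))%Z by rewrite mulrBr -eqz_mod_dvd.
rewrite Gauss_dvdzr 1?coprimez_sym // -eqz_mod_dvd.
have k_abs := gtz0_abs k_gt0.
by rewrite !modz_small => [/eqP||]; lia.
Qed.

Lemma sum_mul_res (R : nmodType) (F : nat -> R) : coprimez h k ->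
  \sum_(0 <= j < `|k|) F (mul_res j) = \sum_(0 <= j < `|k|) F j.
Proof.
move=> hk_coprime; rewrite !big_mkord.
pose res_ord (i : 'I_`|k|) := Ordinal (mul_res_lt i).
have res_inj : injective res_ord.
  move=> i j /(congr1 val) /(mul_res_inj hk_coprime (ltn_ord i) (ltn_ord j)).
  exact: ord_inj.
by rewrite [RHS](reindex_inj res_inj).
Qed.

Lemma sgn_pow_mul_res (j : nat) : odd `|h|%N -> odd `|k|%N ->
  sgn_pow (j%:Z + floorq ((h * j%:Z)%:~R / k%:~R)) = (-1) ^+ mul_res j.
Proof.
move=> /odd_absz_double[a h_odd] /odd_absz_double[b k_odd].
rewrite /floorq floor_divz // -[_ ^+ _]/(sgn_pow (mul_res j)) mul_resE.
set q := ((h * _) %/ k)%Z; set r := ((h * _) %% k)%Z.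
have div_eq : h * j%:Z = q * k + r by rewrite /q /r -divz_eq.
have -> : j%:Z + q = r + 2 * (b * q + q - a * j%:Z).
  by rewrite h_odd k_odd in div_eq; nia.
exact: sgn_powD2.
Qed.

Lemma s5_summand_sub_B1_summand (j : nat) : (0 < j)%N -> (j < `|k|)%N ->
  h%:~R * sawtooth (j%:~R / k%:~R) - (floorq ((h * j%:Z)%:~R / k%:~R))%:~R
  = (mul_res j)%:R / k%:~R - h%:~R / 2.
Proof.
move=> j_gt0 j_lt; have kR_gt0 : (0 : rat) < k%:~R by rewrite ltr0z.
rewrite sawtooth_frac; last first.
  rewrite divr_gt0 ?ltr0z //= ltr_pdivrMr // mul1r ltr_int.
  by rewrite -(gtz0_abs k_gt0) ltz_nat.
rewrite /floorq floor_divz // -[(mul_res j)%:R]/((mul_res j)%:Z%:~R) mul_resE.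
have rE : ((h * j%:Z) %% k)%Z = h * j%:Z - ((h * j%:Z) %/ k)%Z * k.
  by rewrite {2}(divz_eq (h * j%:Z) k) addrC addKr.
by rewrite rE !(intrD, intrM, intrN); field; rewrite gt_eqF.
Qed.

End ResidueSum.

Theorem theorem12 (h k : int) :
  (0 < k) -> coprimez h k -> odd `|h|%N -> odd `|k|%N ->
  B1 h k = h%:~R * s5 h k + 1 / (2 * k%:~R) - 1 / 2.
Proof.
move=> k_gt0 hk_coprime h_odd k_odd.
pose G (r : nat) : rat := (-1) ^+ r * (r%:R * k%:~R^-1 - h%:~R / 2).
have k_pos : (0 < `|k|)%N by rewrite absz_gt0 gt_eqF.
have diff_sum : h%:~R * s5 h k - B1 h k = \sum_(0 <= j < `|k|) G j - G 0.
  rewrite -(sum_mul_res k_gt0 G hk_coprime) /s5 /B1 !(big_ltn k_pos).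
  rewrite [mul_res _ _ _]/mul_res mulr0 mod0z mul0r (sawtooth_int 0) mulr0 add0r.
  rewrite mulr_sumr -sumrB addrAC subrr add0r.
  apply: eq_big_nat => j /andP[j_gt0 j_lt].
  by rewrite mulrCA -mulrBr s5_summand_sub_B1_summand // sgn_pow_mul_res.
have k_half : `|k|%N = (2 * `|k|./2).+1.
  by have := odd_double_half `|k|; rewrite k_odd; lia.
have kR : (k%:~R : rat) = 2 * (`|k|./2)%:R + 1.
  rewrite -(gtz0_abs k_gt0) {1}k_half -[LHS]/(((2 * `|k|./2).+1)%:R).
  by rewrite -addn1 natrD natrM.
have -> : B1 h k = h%:~R * s5 h k - (h%:~R * s5 h k - B1 h k) by ring.
rewrite diff_sum {1}k_half sum_alternating_affine /G expr0 mul1r mul0r kR.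
by field; rewrite -kR intr_eq0 gt_eqF.
Qed.
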